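(* Let $F$ be a graph and let $(G,\varphi)$ and $(G,\psi)$ be two $k$-token reconstructions of $F$. Then $(G,\varphi)$ and $(G,\psi)$ are equivalent if and only if $\mathcal{R}_\varphi=\mathcal{R}_\psi$ or $\mathcal{R}_\varphi=\overline{\mathcal{R}_\psi}$.
   Context: $F_k(G)$ is the graph on the $k$-subsets of $V(G)$ in which $A,B$ are adjacent iff $A\triangle B$ is an edge of $G$. A $k$-token reconstruction of $F$ is a pair $(G',\varphi)$ with $\varphi$ an isomorphism $F\to F_k(G')$. For an isomorphism $s$ between graphs, $\iota(s)$ maps a $k$-set $A$ to $\{s(v):v\in A\}$; $\mathfrak{c}$ maps a $k$-subset $A$ of $V(G)$ to $V(G)\setminus A$. Two $k$-token reconstructions $(G,\varphi),(G,\psi)$ of $F$ are equivalent if there is $s\in\operatorname{Aut}(G)$ with $\psi=\iota(s)\circ\varphi$ or $\psi=\mathfrak{c}\circ\iota(s)\circ\varphi$. For $u\in V(G)$ let $\kappa_G(u,k)=\{A\in V(F_k(G)):u\in A\}$. For a reconstruction $(G,\varphi)$ let $\mathcal{R}_\varphi=\{\varphi^{-1}(\kappa_G(u,k)):u\in V(G)\}$, and for a family $\mathcal{R}$ of subsets of $V(F)$ let $\overline{\mathcal{R}}=\{V(F)\setminus X:X\in\mathcal{R}\}$. *)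

From HB Require Import structures.
From mathcomp Require Import all_boot all_fingroup.
Set Implicit Arguments. Unset Strict Implicit. Unset Printing Implicit Defensive.

Definition simple_graph (T : finType) (e : rel T) : Prop :=
  symmetric e /\ irreflexive e.

(* Vertices of the k-token graph F_k(G): the k-subsets of V(G). *)
Definition ksub (T : finType) (k : nat) := {A : {set T} | #|A| == k}.
HB.instance Definition _ (T : finType) (k : nat) :=
  [Finite of ksub T k by <:].

Definition token_adj (T : finType) (e : rel T) (k : nat) (A B : ksub T k) : bool :=
  [exists a, exists b,
     e a b && ((val A :\: val B) :|: (val B :\: val A) == [set a; b])].

Definition token_reconstruction (TF TG : finType) (eF : rel TF) (eG : rel TG)
    (k : nat) (phi : TF -> ksub TG k) : Prop :=
  bijective phi /\ forall x y, eF x y = token_adj eG (phi x) (phi y).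

Definition is_aut (T : finType) (e : rel T) (s : {perm T}) : Prop :=
  forall a b, e (s a) (s b) = e a b.

(* Equivalence of two k-token reconstructions (G,phi), (G,psi):
   psi = iota(s) o phi, or psi = c o iota(s) o phi, for some s in Aut(G).
   Stated on the underlying sets. *)
Definition equiv_recon (TF TG : finType) (eG : rel TG) (k : nat)
    (phi psi : TF -> ksub TG k) : Prop :=
  exists s : {perm TG}, is_aut eG s /\
    ((forall x, val (psi x) = s @: val (phi x)) \/
     (forall x, val (psi x) = ~: (s @: val (phi x)))).

(* kappa_G(u,k) pulled back along phi : phi^{-1}(kappa_G(u,k)). *)
Definition kappa_pre (TF TG : finType) (k : nat) (phi : TF -> ksub TG k) (u : TG)
  : {set TF} := [set x | u \in val (phi x)].

Definition Rfam (TF TG : finType) (k : nat) (phi : TF -> ksub TG k) : {set {set TF}} :=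
  [set kappa_pre phi u | u : TG].

Definition Rbar (TF : finType) (R : {set {set TF}}) : {set {set TF}} :=
  [set ~: X | X in R].

From mathcomp Require Import all_boot all_fingroup.
From mathcomp Require Import zify.

Set Implicit Arguments. Unset Strict Implicit. Unset Printing Implicit Defensive.

(* When 0 < k < |V(G)|, the map u |-> phi^{-1}(kappa_G(u,k)) is injective, so
   an equality R_phi = R_psi (resp. R_phi = overline R_psi) induces a
   permutation s of V(G) with psi^{-1}(kappa_G(s u,k)) = phi^{-1}(kappa_G(u,k))
   (resp. its complement); equivalently psi = iota(s) o phi (resp.
   c o iota(s) o phi).  Such an s is an automorphism of G: for a <> b and a
   (k-1)-set C avoiding both, the k-sets a+C and b+C are adjacent in F_k(G)
   iff ab is an edge, and phi, psi transport this adjacency to the images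
   s(a)+s(C) and s(b)+s(C), which are adjacent iff s(a)s(b) is an edge.
   Complementation preserves adjacency in token graphs, which handles the
   second case.  When k = 0 or k >= |V(G)|, F_k(G) has at most one vertex and
   the identity works. *)

Definition setCif (T : finType) (b : bool) (A : {set T}) : {set T} :=
  if b then ~: A else A.

Lemma in_setCif (T : finType) (b : bool) (A : {set T}) (x : T) :
  (x \in setCif b A) = (x \in A) (+) b.
Proof. by case: b; rewrite /= ?inE ?addbT ?addbF. Qed.

Lemma setCifK (T : finType) (b : bool) : involutive (@setCif T b).
Proof. by case: b => X //=; rewrite setCK. Qed.

Lemma imset_perm_reindex (T U : finType) (f : T -> U) (s : {perm T}) :
  [set f (s x) | x : T] = [set f x | x : T].
Proof.
apply/setP => y; apply/imsetP/imsetP => [[x _ ->]|[x _ ->]]; first by exists (s x).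
by exists (s^-1 x)%g; rewrite ?permKV.
Qed.

Lemma exists_subset_card (T : finType) (m : nat) (A : {set T}) :
  m <= #|A| -> exists2 C : {set T}, C \subset A & #|C| = m.
Proof.
move=> le_m_A; exists [set x in take m (enum A)].
  by apply/subsetP => x; rewrite inE => /mem_take; rewrite mem_enum.
rewrite cardsE; move/card_uniqP: (take_uniq m (enum_uniq (mem A))) => ->.
by rewrite size_takel // -cardE.
Qed.

Section SetAdjacency.

Variables (T : finType) (e : rel T).

Definition set_adj (X Y : {set T}) : bool :=
  [exists a, exists b, e a b && ((X :\: Y) :|: (Y :\: X) == [set a; b])].

Lemma set_adj_setCif (b : bool) (X Y : {set T}) :
  set_adj (setCif b X) (setCif b Y) = set_adj X Y.
Proof.
case: b => //; rewrite /set_adj /=.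
suff -> : ~: X :\: ~: Y :|: ~: Y :\: ~: X = X :\: Y :|: Y :\: X by [].
by apply/setP => z; rewrite !inE; case: (z \in X); case: (z \in Y).
Qed.

Hypothesis e_sym : symmetric e.

Lemma set_adj_setU1 (a b : T) (C : {set T}) :
  a != b -> a \notin C -> b \notin C -> set_adj (a |: C) (b |: C) = e a b.
Proof.
move=> neq_ab aC bC; rewrite /set_adj.
have -> : (a |: C) :\: (b |: C) :|: (b |: C) :\: (a |: C) = [set a; b].
  apply/setP => z; rewrite !inE.
  case: (eqVneq z a) => [->|_]; first by rewrite (negPf neq_ab) (negPf aC).
  by case: (eqVneq z b) => [->|_] /=; [rewrite (negPf bC) | case: (z \in C)].
apply/existsP/idP => [[a' /existsP [b' /andP [e_ab' /eqP ab'E]]]|e_ab]; last first.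
  by exists a; apply/existsP; exists b; rewrite e_ab eqxx.
have : a \in [set a'; b'] by rewrite -ab'E !inE eqxx.
have : b \in [set a'; b'] by rewrite -ab'E !inE eqxx orbT.
rewrite !inE => /orP [/eqP hb|/eqP hb] /orP [/eqP ha|/eqP ha]; subst => //.
- by rewrite eqxx in neq_ab.
- by rewrite e_sym.
- by rewrite eqxx in neq_ab.
Qed.

Lemma set_adj_imset_setU1 (s : {perm T}) (a b : T) (C : {set T}) :
  a != b -> a \notin C -> b \notin C ->
  set_adj (s @: (a |: C)) (s @: (b |: C)) = e (s a) (s b).
Proof.
move=> neq_ab aC bC; rewrite !imsetU1 set_adj_setU1 ?(inj_eq perm_inj) //.
  by rewrite mem_imset //; exact: perm_inj.
by rewrite mem_imset //; exact: perm_inj.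
Qed.

End SetAdjacency.

Lemma token_adjE (T : finType) (e : rel T) (k : nat) (A B : ksub T k) :
  token_adj e A B = set_adj e (val A) (val B).
Proof. by []. Qed.

Section KSubsets.

Variables (T : finType) (k : nat).

Lemma ksub_setU1_pair (a b : T) :
  0 < k < #|T| -> a != b ->
  exists C : {set T}, exists A B : ksub T k,
    [/\ val A = a |: C, val B = b |: C, a \notin C & b \notin C].
Proof.
move=> /andP [k_gt0 k_lt] neq_ab.
have : k.-1 <= #|~: [set a; b]| by rewrite cardsCs setCK cards2 neq_ab; lia.
case/exists_subset_card => C sub_C card_C.
have aC : a \notin C by apply/negP => /(subsetP sub_C); rewrite !inE eqxx.
have bC : b \notin C by apply/negP => /(subsetP sub_C); rewrite !inE eqxx orbT.
have card_aC : #|a |: C| == k by rewrite cardsU1 aC card_C add1n prednK.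
have card_bC : #|b |: C| == k by rewrite cardsU1 bC card_C add1n prednK.
by exists C, (exist _ (a |: C) card_aC), (exist _ (b |: C) card_bC).
Qed.

Lemma ksub_eq_degenerate :
  ~~ (0 < k < #|T|) -> forall A B : ksub T k, A = B.
Proof.
move=> k_out A B; apply: val_inj.
have val_ksub (X : ksub T k) : val X = if k == 0 then set0 else setT.
  have card_X : #|val X| = k := eqP (valP X).
  case: eqP => [k0 | /eqP k_neq0]; first by apply: cards0_eq; rewrite card_X.
  rewrite lt0n k_neq0 /= -leqNgt in k_out.
  by apply/eqP; rewrite eqEcard subsetT cardsT card_X.
by rewrite !val_ksub.
Qed.

End KSubsets.

Section Reconstructions.

Variables (TF TG : finType) (eF : rel TF) (eG : rel TG) (k : nat).
Implicit Types (phi psi : TF -> ksub TG k) (s : {perm TG}) (b : bool).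

Lemma kappa_pre_inj phi :
  bijective phi -> 0 < k < #|TG| -> injective (kappa_pre phi).
Proof.
move=> [phi' _ phiK'] k_range u v eq_uv; have [// | neq_uv] := eqVneq u v.
have [C [A [_ [Au _ _ vC]]]] := ksub_setU1_pair k_range neq_uv.
have : phi' A \in kappa_pre phi u by rewrite inE phiK' Au setU11.
by rewrite eq_uv inE phiK' Au !inE (negPf vC) orbF eq_sym (negPf neq_uv).
Qed.

Lemma transportP phi psi s b :
  (forall x, val (psi x) = setCif b (s @: val (phi x))) <->
  (forall u, kappa_pre psi (s u) = setCif b (kappa_pre phi u)).
Proof.
have mem_s (X : {set TG}) u : (s u \in setCif b (s @: X)) = (u \in X) (+) b.
  by rewrite in_setCif mem_imset //; exact: perm_inj.
split=> h.
  by move=> u; apply/setP => x; rewrite in_setCif !inE h mem_s.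
move=> x; apply/setP => z; rewrite -(permKV s z) mem_s.
by have /setP /(_ x) := h (s^-1 z)%g; rewrite in_setCif !inE.
Qed.

Lemma Rfam_transport phi psi s (F : {set TF} -> {set TF}) :
  (forall u, kappa_pre psi (s u) = F (kappa_pre phi u)) ->
  Rfam psi = F @: Rfam phi.
Proof.
move=> h; rewrite /Rfam -imset_comp -(imset_perm_reindex _ s).
by apply: eq_imset => u /=; rewrite h.
Qed.

Lemma transport_of_Rfam phi psi (F : {set TF} -> {set TF}) :
  injective (kappa_pre phi) -> involutive F -> Rfam phi = F @: Rfam psi ->
  exists s, forall u, kappa_pre psi (s u) = F (kappa_pre phi u).
Proof.
move=> kappa_inj FK hR.
have ex_f u : exists v, kappa_pre psi v = F (kappa_pre phi u).
  have : kappa_pre phi u \in Rfam phi by apply: imset_f.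
  by rewrite hR => /imsetP [_ /imsetP [v _ ->] ->]; exists v; rewrite FK.
have [f hf] := fin_all_exists ex_f.
have f_inj : injective f.
  by move=> u v eq_f; apply/kappa_inj/(can_inj FK); rewrite -!hf eq_f.
by exists (perm f_inj) => u; rewrite permE hf.
Qed.

Lemma transport_is_aut phi psi s b :
  simple_graph eG ->
  token_reconstruction eF eG phi -> token_reconstruction eF eG psi ->
  0 < k < #|TG| ->
  (forall x, val (psi x) = setCif b (s @: val (phi x))) -> is_aut eG s.
Proof.
move=> [eG_sym eG_irr] [[phi' _ phiK'] adj_phi] [_ adj_psi] k_range hpsi a c.
have [-> | neq_ac] := eqVneq a c; first by rewrite !eG_irr.
have [C [A [B [Aa Bc aC cC]]]] := ksub_setU1_pair k_range neq_ac.
have := adj_psi (phi' A) (phi' B).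
rewrite adj_phi !token_adjE !hpsi !phiK' Aa Bc.
by rewrite set_adj_setCif set_adj_setU1 // set_adj_imset_setU1.
Qed.

Lemma equiv_reconP phi psi :
  equiv_recon eG phi psi <->
  exists s, is_aut eG s /\ exists b, forall x, val (psi x) = setCif b (s @: val (phi x)).
Proof.
split=> [[s [aut_s [h|h]]] | [s [aut_s [[] h]]]]; exists s; split => //.
- by exists false.
- by exists true.
- by right.
- by left.
Qed.

Lemma Rfam_eq_or_RbarP phi psi :
  (Rfam phi = Rfam psi \/ Rfam phi = Rbar (Rfam psi)) <->
  exists b, Rfam phi = setCif b @: Rfam psi.
Proof.
have setCif0 (R : {set {set TF}}) : setCif false @: R = R by exact: imset_id.
split=> [[h|h] | [[] h]]; [exists false | exists true | right | left] => //.
- by rewrite setCif0.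
- by rewrite h setCif0.
Qed.

End Reconstructions.

Theorem proposition13 (TF TG : finType) (eF : rel TF) (eG : rel TG) (k : nat)
    (phi psi : TF -> ksub TG k) :
  simple_graph eF -> simple_graph eG ->
  token_reconstruction eF eG phi -> token_reconstruction eF eG psi ->
  equiv_recon eG phi psi <-> (Rfam phi = Rfam psi \/ Rfam phi = Rbar (Rfam psi)).
Proof.
move=> _ simple_G rphi rpsi; rewrite Rfam_eq_or_RbarP; split.
  case/equiv_reconP => s [_ [b /transportP /Rfam_transport hR]]; exists b.
  by rewrite hR -imset_comp (eq_imset _ (setCifK b)) imset_id.
case=> b hR; apply/equiv_reconP.
have [k_range | k_out] := boolP (0 < k < #|TG|).
  have [s hs] := transport_of_Rfam (kappa_pre_inj (proj1 rphi) k_range) (setCifK b) hR.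
  have hpsi := (transportP phi psi s b).2 hs.
  by exists s; split; [exact: transport_is_aut simple_G rphi rpsi k_range hpsi | exists b].
exists 1%g; split; first by move=> a c; rewrite !perm1.
by exists false => x; rewrite imset_perm1 (ksub_eq_degenerate k_out (psi x) (phi x)).
Qed.
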